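(* Let $X$ be a Banach space, $\alpha$ a left tensorial norm on $\ell_\infty\otimes X$, and let $L$ be a Banach lattice and $J\colon X\to L$ a linear isometry such that $\|\bigvee_{j=1}^k|Jy_j|\|=\alpha(\sum_{j=1}^k e_j\otimes y_j)$ for all $k$ and all $y_1,\dots,y_k\in X$. Then for all $n\in\mathbb{N}$, all $x_1,\dots,x_n\in X$ and all $h_1,\dots,h_n\in\ell_\infty$, $$\Big\|\sum_{j=1}^n h_j\otimes Jx_j\Big\|_m=\alpha\Big(\sum_{j=1}^n h_j\otimes x_j\Big).$$
   Context: All spaces are real. $(e_j)$ is the unit vector basis of $c_0\subseteq\ell_\infty$. A norm $\alpha$ on $Y\otimes X$ is left tensorial if $\alpha(y\otimes x)=\|y\|\|x\|$ and $\|T\otimes I_X\|\le\|T\|$ on $(Y\otimes X,\alpha)$ for every bounded $T\colon Y\to Y$. For a Banach space $F$, a Banach lattice $L$ and $u=\sum_{j=1}^n f_j\otimes y_j\in F\otimes L$, $\|u\|_m$ is the order bounded norm of the operator $F^*\to L$, $\varphi\mapsto\sum_j\varphi(f_j)y_j$, i.e. $\|u\|_m=\inf\{\|z\|: z\in L,\ z\ge 0,\ |\sum_j\varphi(f_j)y_j|\le\|\varphi\|z \text{ for all }\varphi\in F^*\}$; equivalently (Krivine calculus) $\|u\|_m=\|\sup_{\|\varphi\|\le1}|\sum_j\varphi(f_j)y_j|\|_L$. *)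

From HB Require Import structures.
From mathcomp Require Import all_boot all_order all_algebra.
From mathcomp Require Import all_classical all_reals.
From mathcomp Require Import topology normedtype.
Set Implicit Arguments. Unset Strict Implicit. Unset Printing Implicit Defensive.
Import Order.TTheory GRing.Theory Num.Theory.
Import numFieldNormedType.Exports.
Local Open Scope ring_scope.
Local Open Scope classical_set_scope.

Section Linf.
Variable R : realType.

Definition bounded_seq : {pred nat -> R} :=
  fun f => `[< exists M : R, forall n, `|f n| <= M >].

Lemma bounded_seq_closed : GRing.subsemimod_closed bounded_seq.
Proof.
split; [split|].
- apply/asboolP; exists 0 => n; by rewrite normr0.
- move=> f g /asboolP [Mf hf] /asboolP [Mg hg]; apply/asboolP; exists (Mf + Mg) => n.
  by rewrite /= (le_trans (ler_normD _ _)) // lerD.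
- move=> a f /asboolP [Mf hf]; apply/asboolP; exists (`|a| * Mf) => n.
  by rewrite /= normrM ler_wpM2l.
Qed.

HB.instance Definition _ := GRing.isSubmodClosed.Build R (nat -> R) bounded_seq
  bounded_seq_closed.

Record linf := Linf { lval : nat -> R; lvalP : lval \in bounded_seq }.

HB.instance Definition _ := [isSub for lval].
HB.instance Definition _ := [Choice of linf by <:].
HB.instance Definition _ := [SubChoice_isSubLmodule of linf by <:].

Definition linf_norm (h : linf) : R := sup (range (fun n => `|lval h n|)).

(* the unit vector e_j (index j : nat, coordinates starting at 0) *)
Lemma unit_vec_bounded (j : nat) :
  (fun n : nat => if n == j then (1 : R) else 0) \in bounded_seq.
Proof.
apply/asboolP; exists 1 => n; case: (n == j); by rewrite ?normr1 ?normr0.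
Qed.

Definition unit_vec (j : nat) : linf := Linf (unit_vec_bounded j).

End Linf.

(* Algebraic tensor products, represented by finite sums              *)
(* sum_j y_j (x) x_j, i.e. by sequences of pairs (y_j, x_j).          *)
Section Tensor.
Variable R : realType.
Variables (Y X : lmodType R).

Definition bilinear_form (B : Y -> X -> R) : Prop :=
  (forall x a y1 y2, B (a *: y1 + y2) x = a * B y1 x + B y2 x) /\
  (forall y a x1 x2, B y (a *: x1 + x2) = a * B y x1 + B y x2).

Definition tensor_eval (B : Y -> X -> R) (u : seq (Y * X)) : R :=
  \sum_(p <- u) B p.1 p.2.

(* two finite sums represent the same element of Y (x) X
   (universal property of the algebraic tensor product) *)
Definition tensor_eq (u v : seq (Y * X)) : Prop :=
  forall B, bilinear_form B -> tensor_eval B u = tensor_eval B v.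

Definition tscale (a : R) (u : seq (Y * X)) : seq (Y * X) :=
  [seq (a *: p.1, p.2) | p <- u].

Definition tensor_norm (alpha : seq (Y * X) -> R) : Prop :=
  [/\ (forall u v, tensor_eq u v -> alpha u = alpha v),
      (forall u, alpha u = 0 <-> tensor_eq u [::]),
      (forall a u, alpha (tscale a u) = `|a| * alpha u) &
      (forall u v, alpha (u ++ v) <= alpha u + alpha v)].

Definition tensor_mapl (T : Y -> Y) (u : seq (Y * X)) : seq (Y * X) :=
  [seq (T p.1, p.2) | p <- u].

Definition linear_map (T : Y -> Y) : Prop :=
  forall a y1 y2, T (a *: y1 + y2) = a *: T y1 + T y2.

(* alpha is a left tensorial norm, for the norms nY on Y and nX on X.
   ||T (x) I_X|| <= ||T|| is written out with the operator norm unfolded: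
   for every C >= 0 with ||T y|| <= C ||y|| for all y, one has
   alpha((T (x) I) u) <= C alpha(u) for all u. *)
Definition left_tensorial (nY : Y -> R) (nX : X -> R)
    (alpha : seq (Y * X) -> R) : Prop :=
  [/\ tensor_norm alpha,
      (forall y x, alpha [:: (y, x)] = nY y * nX x) &
      (forall T : Y -> Y, linear_map T -> forall C : R, 0 <= C ->
         (forall y, nY (T y) <= C * nY y) ->
         forall u, alpha (tensor_mapl T u) <= C * alpha u)].

End Tensor.

Section BanachLattice.
Variable R : realType.
Variable L : normedModType R.
Variables (le : L -> L -> Prop) (vee : L -> L -> L).

Definition labs (x : L) : L := vee x (- x).

(* Completeness is asked separately
   (L : completeNormedModType R). *)
Record is_normed_lattice : Prop := {
  le_refl : forall x, le x x;
  le_anti : forall x y, le x y -> le y x -> x = y;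
  le_trans : forall x y z, le x y -> le y z -> le x z;
  le_add : forall x y z, le x y -> le (x + z) (y + z);
  le_scale : forall (a : R) x y, 0 <= a -> le x y -> le (a *: x) (a *: y);
  vee_ub1 : forall x y, le x (vee x y);
  vee_ub2 : forall x y, le y (vee x y);
  vee_lub : forall x y z, le x z -> le y z -> le (vee x y) z;
  norm_mono : forall x y, le (labs x) (labs y) -> `|x| <= `|y|
}.

(* the order bounded norm ||u||_m of u = sum_j f_j (x) y_j in ell_infty (x) L:
   inf { ||z|| : z >= 0, |sum_j phi(f_j) y_j| <= z for all phi in the
   closed unit ball of ell_infty^* }. *)
Definition dual_ball (phi : linf R -> R) : Prop :=
  (forall a h1 h2, phi (a *: h1 + h2) = a * phi h1 + phi h2) /\
  (forall h, `|phi h| <= linf_norm h).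

Definition mnorm (u : seq (linf R * L)) : R :=
  inf [set `|z| | z in [set z : L | le 0 z /\
         forall phi, dual_ball phi ->
           le (labs (\sum_(p <- u) phi p.1 *: p.2)) z]].

End BanachLattice.

From Pilot Require Import Defs.
From HB Require Import structures.
From mathcomp Require Import all_boot all_order all_algebra.
From mathcomp Require Import all_classical all_reals.
From mathcomp Require Import topology normedtype.
From mathcomp Require Import ring lra.
Import Order.TTheory GRing.Theory Num.Theory.
Import numFieldNormedType.Exports.
Local Open Scope ring_scope.
Set Implicit Arguments. Unset Strict Implicit. Unset Printing Implicit Defensive.

(* Fix d > 0 and cut the index set into finitely many cells on which every h_j
   varies by at most d, with one chosen point p_i per cell.  Sampling at the
   p_i and spreading back along the cells are linear contractions of ell_infty,
   so by left tensoriality alpha(sum_j h_j (x) x_j) is within d sum_j ||x_j|| of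
   alpha(sum_i e_i (x) y_i), y_i = sum_j h_j(p_i) x_j, which the hypothesis on J
   identifies with ||V||, V = \/_i |J y_i|.  On the lattice side, evaluating at
   p_i shows that every majorant in the definition of ||.||_m dominates V, while
   V + d sum_j |J x_j| is a majorant because sum_i |phi(e_i)| <= 1 for phi in the
   dual ball.  Letting d -> 0 gives the equality. *)


Lemma morph_linear_combination (R : pzRingType) (V : lmodType R) (W : zmodType)
    (s : R -> W -> W) (f : V -> W) :
  (forall a v1 v2, f (a *: v1 + v2) = s a (f v1) + f v2) -> (forall w, s 1 w = w) ->
  forall (I : Type) (r : seq I) (c : I -> R) (g : I -> V),
    f (\sum_(i <- r) c i *: g i) = \sum_(i <- r) s (c i) (f (g i)).
Proof.
move=> f_lin s1 I r c g.
have f0 : f 0 = 0.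
  have := f_lin 1 0 0; rewrite scaler0 addr0 s1 => f00.
  by apply: (addrI (f 0)); rewrite addr0 -f00.
elim: r => [|i r IH]; first by rewrite !big_nil.
by rewrite !big_cons f_lin IH.
Qed.

Lemma scalar_linear_combination (R : pzRingType) (V : lmodType R) (f : V -> R) :
  (forall a v1 v2, f (a *: v1 + v2) = a * f v1 + f v2) ->
  forall (I : Type) (r : seq I) (c : I -> R) (g : I -> V),
    f (\sum_(i <- r) c i *: g i) = \sum_(i <- r) c i * f (g i).
Proof. by move=> f_lin; exact: (@morph_linear_combination R V R *%R f f_lin (@mul1r R)). Qed.

Section Linf.
Variable R : realType.
Implicit Types (g : linf R) (f : nat -> option nat).

Lemma lval_bounded g : exists M, forall m, `|lval g m| <= M.
Proof. by have := lvalP g; rewrite inE. Qed.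

Lemma lval_le_linf_norm g m : `|lval g m| <= linf_norm g.
Proof.
have [M gM] := lval_bounded g.
by apply: ub_le_sup; [exists M => _ [k _ <-]; exact: gM | exists m].
Qed.

Lemma linf_norm_le g c : (forall m, `|lval g m| <= c) -> linf_norm g <= c.
Proof. by move=> gc; apply: ge_sup; [exists `|lval g 0|, 0 | move=> _ [k _ <-]]. Qed.

Lemma linf_norm_ge0 g : 0 <= linf_norm g.
Proof. exact: le_trans (normr_ge0 _) (lval_le_linf_norm g 0). Qed.

Lemma linfP g1 g2 : lval g1 =1 lval g2 -> g1 = g2.
Proof. by move=> eq12; apply: val_inj; apply: funext. Qed.

Lemma lval_sum (I : Type) (r : seq I) (c : I -> R) (gs : I -> linf R) m :
  lval (\sum_(i <- r) c i *: gs i) m = \sum_(i <- r) c i * lval (gs i) m.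
Proof. exact: (scalar_linear_combination (f := fun g : linf R => lval g m)). Qed.

Lemma pullback_bounded f g : (fun m => oapp (lval g) 0 (f m)) \in bounded_seq (R := R).
Proof.
apply/asboolP; exists (linf_norm g) => m.
by case: (f m) => [k|] /=; rewrite ?normr0 ?lval_le_linf_norm ?linf_norm_ge0.
Qed.

(* Composition with a partial map of the index set; [f m = None] reads as 0. *)
Definition linf_pullback f g : linf R := Linf (pullback_bounded f g).

Lemma linear_pullback f : linear_map (linf_pullback f).
Proof.
move=> a g1 g2; apply: linfP => m /=; rewrite !fctE.
by case: (f m) => [k|] //=; rewrite scaler0 addr0.
Qed.

Lemma linf_norm_pullback f g : linf_norm (linf_pullback f g) <= linf_norm g.
Proof.
apply: linf_norm_le => m /=.
by case: (f m) => [k|] /=; rewrite ?normr0 ?lval_le_linf_norm ?linf_norm_ge0.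
Qed.

Lemma lval_sum_unit_vec r (c : 'I_r -> R) m :
  lval (\sum_(i <- enum 'I_r) c i *: unit_vec R i) m = if insub m is Some i then c i else 0.
Proof.
rewrite lval_sum /=; case: insubP => [i _ <-|m_ge_r].
  rewrite (bigD1_seq i) ?mem_enum ?enum_uniq //= eqxx mulr1 big1_seq ?addr0 //.
  by move=> k /andP [k_neq_i _]; rewrite (inj_eq val_inj) eq_sym (negbTE k_neq_i) mulr0.
rewrite big1_seq // => i _; case: eqP => [m_eq_i|]; last by rewrite mulr0.
by rewrite m_eq_i ltn_ord in m_ge_r.
Qed.

Lemma pullback_insub r (p : 'I_r -> nat) g :
  linf_pullback (fun m => omap p (insub m)) g
    = \sum_(i <- enum 'I_r) lval g (p i) *: unit_vec R i.
Proof. by apply: linfP => m; rewrite lval_sum_unit_vec /=; case: insub. Qed.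

Section DualBall.
Variable phi : linf R -> R.
Hypothesis phi_ball : dual_ball phi.

Lemma dual_ball_sum (I : Type) (r : seq I) (c : I -> R) (gs : I -> linf R) :
  phi (\sum_(i <- r) c i *: gs i) = \sum_(i <- r) c i * phi (gs i).
Proof. exact: scalar_linear_combination phi_ball.1 _ _ _ _. Qed.

Lemma dual_ballB g1 g2 : phi (g1 - g2) = phi g1 - phi g2.
Proof. by rewrite addrC -scaleN1r phi_ball.1 mulN1r addrC. Qed.

Lemma dual_ball_comp (T : linf R -> linf R) :
  linear_map T -> (forall g, linf_norm (T g) <= linf_norm g) -> dual_ball (phi \o T).
Proof.
move=> T_lin T_contr; split=> [a g1 g2|g] /=; first by rewrite T_lin phi_ball.1.
exact: le_trans (phi_ball.2 _) (T_contr g).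
Qed.

(* Test [phi] against the sign vector of its values on the unit vectors. *)
Lemma dual_ball_sum_unit_vec r : \sum_(i <- enum 'I_r) `|phi (unit_vec R i)| <= 1.
Proof.
have -> : \sum_(i <- enum 'I_r) `|phi (unit_vec R i)|
    = phi (\sum_(i <- enum 'I_r) Num.sg (phi (unit_vec R i)) *: unit_vec R i).
  by rewrite dual_ball_sum; apply: eq_bigr => i _; rewrite normrEsg.
apply: le_trans (ler_norm _) _; apply: le_trans (phi_ball.2 _) _.
apply: linf_norm_le => m; rewrite lval_sum_unit_vec.
by case: insub => [i|]; rewrite ?normr0 // normr_sg; case: (_ != 0).
Qed.

End DualBall.

Lemma dual_ball_eval m : dual_ball (fun g : linf R => lval g m).
Proof. by split=> // g; exact: lval_le_linf_norm. Qed.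

End Linf.

Section TensorEq.
Variables (R : realType) (Y X : lmodType R).

Lemma tensor_eq_split (I : Type) (s : seq I) (a b : I -> Y) (x : I -> X) :
  tensor_eq [seq (a i, x i) | i <- s]
    ([seq (b i, x i) | i <- s] ++ [seq (a i - b i, x i) | i <- s]).
Proof.
move=> B [B_linl _]; rewrite /tensor_eval big_cat !big_map /= -big_split /=.
apply: eq_bigr => i _.
by rewrite [a i - b i]addrC -scaleN1r B_linl mulN1r addNKr.
Qed.

Lemma tensor_eq_exchange (I K : Type) (sI : seq I) (sK : seq K) (c : K -> I -> R)
    (e : I -> Y) (x : K -> X) :
  tensor_eq [seq (e i, \sum_(k <- sK) c k i *: x k) | i <- sI]
            [seq (\sum_(i <- sI) c k i *: e i, x k) | k <- sK].
Proof.
move=> B [B_linl B_linr]; rewrite /tensor_eval !big_map /=.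
under eq_bigr => i _ do rewrite (scalar_linear_combination (B_linr (e i))).
under [RHS]eq_bigr => k _ do rewrite (scalar_linear_combination (B_linl (x k))).
exact: exchange_big.
Qed.

End TensorEq.

Section LeftTensorial.
Variables (R : realType) (Y X : lmodType R).
Variables (nY : Y -> R) (nX : X -> R) (alpha : seq (Y * X) -> R).
Hypothesis alpha_tens : left_tensorial nY nX alpha.

Lemma alpha_tensor_eq u v : tensor_eq u v -> alpha u = alpha v.
Proof. by case: alpha_tens => [[alpha_eq _ _ _] _ _]; exact: alpha_eq. Qed.

Lemma alpha_cat u v : alpha (u ++ v) <= alpha u + alpha v.
Proof. by case: alpha_tens => [[_ _ _ alpha_tri] _ _]; exact: alpha_tri. Qed.

Lemma alpha_le_sum_norms u : alpha u <= \sum_(p <- u) nY p.1 * nX p.2.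
Proof.
case: alpha_tens => [[_ alpha0 _ _] alpha1 _].
elim: u => [|[y x] u IH]; first by rewrite big_nil (alpha0 [::]).2.
rewrite big_cons -cat1s; apply: le_trans (alpha_cat _ _) _.
by rewrite alpha1 lerD2l.
Qed.

Lemma alpha_contraction (T : Y -> Y) : linear_map T -> (forall y, nY (T y) <= nY y) ->
  forall (I : Type) (s : seq I) (a : I -> Y) (b : I -> X),
    alpha [seq (T (a i), b i) | i <- s] <= alpha [seq (a i, b i) | i <- s].
Proof.
case: alpha_tens => [_ _ alpha_map] T_lin T_contr I s a b.
have := alpha_map T T_lin 1 ler01 _ [seq (a i, b i) | i <- s].
by rewrite mul1r /tensor_mapl -map_comp; apply=> y; rewrite mul1r.
Qed.

End LeftTensorial.

Section NormedLattice.
Variables (R : realType) (L : normedModType R).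
Variables (le : L -> L -> Prop) (vee : L -> L -> L).
Hypothesis lat : is_normed_lattice le vee.
Local Notation labs := (labs vee).

Lemma lat_le_refl x : le x x.
Proof. exact: (Defs.le_refl lat). Qed.

Lemma lat_le_trans y x z : le x y -> le y z -> le x z.
Proof. exact: (Defs.le_trans lat). Qed.

Lemma lat_lerD a b c d : le a b -> le c d -> le (a + c) (b + d).
Proof.
move=> ab cd; apply: lat_le_trans (Defs.le_add lat c ab) _.
by rewrite ![b + _]addrC; exact: (Defs.le_add lat _ cd).
Qed.

Lemma lat_lerN x y : le x y -> le (- y) (- x).
Proof.
move=> /(Defs.le_add lat (- x - y)).
by rewrite addrA subrr add0r addrCA subrr addr0.
Qed.

Lemma lat_ler_wpZ2r (s t : R) a : s <= t -> le 0 a -> le (s *: a) (t *: a).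
Proof.
rewrite -subr_ge0 => st a_ge0.
have := Defs.le_add lat (s *: a) (Defs.le_scale lat st a_ge0).
by rewrite scaler0 add0r -scalerDl subrK.
Qed.

Lemma lat_abs_ge x : le x (labs x).
Proof. exact: (vee_ub1 lat). Qed.

Lemma lat_abs_geN x : le (- x) (labs x).
Proof. exact: (vee_ub2 lat). Qed.

Lemma lat_abs_ge0 x : le 0 (labs x).
Proof.
have := lat_lerD (lat_abs_ge x) (lat_abs_geN x).
rewrite subrr -mulr2n -scaler_nat => two_abs_ge0.
have half_ge0 : 0 <= (2 : R)^-1 by rewrite invr_ge0.
have := Defs.le_scale lat half_ge0 two_abs_ge0.
by rewrite scaler0 scalerA mulVf ?pnatr_eq0 // scale1r.
Qed.

Lemma lat_abs_lub x z : le x z -> le (- x) z -> le (labs x) z.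
Proof. exact: (vee_lub lat). Qed.

Lemma lat_abs_id b : le 0 b -> le (labs b) b.
Proof.
move=> b_ge0; apply: lat_abs_lub; first exact: lat_le_refl.
by apply: lat_le_trans (lat_lerN b_ge0) _; rewrite oppr0.
Qed.

Lemma lat_absZ (c : R) a : le (labs (c *: a)) (`|c| *: labs a).
Proof.
have scale_le c' : le (c' *: a) (`|c'| *: labs a).
  have [c'_ge0|c'_lt0] := leP 0 c'.
    by rewrite ger0_norm //; apply: (Defs.le_scale lat c'_ge0); exact: lat_abs_ge.
  have -> : c' *: a = (- c') *: (- a) by rewrite scalerN scaleNr opprK.
  rewrite ltr0_norm //; apply: (Defs.le_scale lat); last exact: lat_abs_geN.
  by rewrite oppr_ge0 ltW.
by apply: lat_abs_lub; rewrite // -scaleNr -(normrN c).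
Qed.

Lemma lat_absD a b : le (labs (a + b)) (labs a + labs b).
Proof.
apply: lat_abs_lub; first exact: lat_lerD (lat_abs_ge a) (lat_abs_ge b).
by rewrite opprD; exact: lat_lerD (lat_abs_geN a) (lat_abs_geN b).
Qed.

Lemma lat_ler_sum (I : Type) (s : seq I) (P : pred I) (F G : I -> L) :
  (forall i, P i -> le (F i) (G i)) ->
  le (\sum_(i <- s | P i) F i) (\sum_(i <- s | P i) G i).
Proof.
move=> FG; apply: (big_ind2 le) => //; first exact: lat_le_refl.
by move=> *; exact: lat_lerD.
Qed.

Lemma lat_sumr_ge0 (I : Type) (s : seq I) (F : I -> L) :
  (forall i, le 0 (F i)) -> le 0 (\sum_(i <- s) F i).
Proof.
move=> F_ge0; apply: lat_le_trans _ (lat_ler_sum _ (fun i _ => F_ge0 i)).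
by rewrite big1_eq; exact: lat_le_refl.
Qed.

Lemma lat_abs_sum (I : Type) (s : seq I) (F : I -> L) :
  le (labs (\sum_(i <- s) F i)) (\sum_(i <- s) labs (F i)).
Proof.
elim/big_rec2: _ => [|i a b _ ab]; first exact: lat_abs_id (lat_le_refl 0).
exact: lat_le_trans (lat_absD _ _) (lat_lerD (lat_le_refl _) ab).
Qed.

Lemma lat_norm_le a b : le 0 a -> le a b -> `|a| <= `|b|.
Proof.
move=> a_ge0 ab; apply: (norm_mono lat).
exact: lat_le_trans (lat_abs_id a_ge0) (lat_le_trans ab (lat_abs_ge b)).
Qed.

Lemma lat_norm_abs a : `|labs a| = `|a|.
Proof.
apply/eqP; rewrite eq_le; apply/andP; split; apply: (norm_mono lat).
  exact: lat_abs_id (lat_abs_ge0 a).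
exact: lat_abs_ge.
Qed.

Lemma lat_bigvee_ge0 (I : Type) (s : seq I) (F : I -> L) :
  (forall i, le 0 (F i)) -> le 0 (\big[vee/0]_(i <- s) F i).
Proof.
move=> F_ge0; apply: (big_ind (le 0)) => //; first exact: lat_le_refl.
by move=> a b a_ge0 _; exact: lat_le_trans a_ge0 (vee_ub1 lat _ _).
Qed.

Lemma lat_bigvee_lub (I : Type) (s : seq I) (F : I -> L) z :
  le 0 z -> (forall i, le (F i) z) -> le (\big[vee/0]_(i <- s) F i) z.
Proof. by move=> z_ge0 Fz; apply: (big_ind (le^~ z)) => // a b; exact: (vee_lub lat). Qed.

Lemma lat_bigvee_ub (I : eqType) (s : seq I) (F : I -> L) i :
  i \in s -> le (F i) (\big[vee/0]_(k <- s) F k).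
Proof.
elim: s => [//|k s IH]; rewrite inE big_cons => /predU1P [->|/IH Fi_le].
  exact: (vee_ub1 lat).
exact: lat_le_trans Fi_le (vee_ub2 lat _ _).
Qed.

Lemma lat_abs_combination_le_bigvee (I : eqType) (s t : seq I) (c : I -> R) (F : I -> L) :
  {subset s <= t} -> \sum_(i <- s) `|c i| <= 1 ->
  le (labs (\sum_(i <- s) c i *: F i)) (\big[vee/0]_(i <- t) labs (F i)).
Proof.
move=> st c_le1; set V := \big[vee/0]_(i <- t) _.
have V_ge0 : le 0 V by apply: lat_bigvee_ge0 => i; exact: lat_abs_ge0.
apply: lat_le_trans (lat_abs_sum _ _) _.
apply: (@lat_le_trans (\sum_(i <- s) `|c i| *: V)).
  rewrite big_seq [X in le _ X]big_seq; apply: lat_ler_sum => i i_s.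
  apply: lat_le_trans (lat_absZ _ _) (Defs.le_scale lat (normr_ge0 _) _).
  exact: (lat_bigvee_ub (fun k => labs (F k)) (st _ i_s)).
by rewrite -scaler_suml -[X in le _ X]scale1r; exact: lat_ler_wpZ2r.
Qed.

Lemma lat_abs_combination_le_sum (I : Type) (s : seq I) (c : I -> R) (F : I -> L) d :
  (forall i, `|c i| <= d) ->
  le (labs (\sum_(i <- s) c i *: F i)) (d *: \sum_(i <- s) labs (F i)).
Proof.
move=> c_le_d; apply: lat_le_trans (lat_abs_sum _ _) _.
rewrite scaler_sumr; apply: lat_ler_sum => i _.
exact: lat_le_trans (lat_absZ _ _) (lat_ler_wpZ2r (c_le_d i) (lat_abs_ge0 _)).
Qed.

End NormedLattice.

Lemma finite_range_section (K : finType) (key : nat -> K) :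
  exists r (q : nat -> 'I_r) (p : 'I_r -> nat),
    cancel p q /\ forall m, key (p (q m)) = key m.
Proof.
pose rep k := get [set m | key m = k].
pose rho m := rep (key m).
have key_rho m : key (rho m) = key m.
  by apply: (@getPex _ [set m' | key m' = key m]); exists m.
have rhoK m : rho (rho m) = rho m by rewrite /rho key_rho.
pose P := undup [seq rho (rep k) | k <- enum K].
have rho_in_P m : rho m \in P.
  by rewrite mem_undup; apply/mapP; exists (key m); [rewrite mem_enum | exact: esym (rhoK m)].
have rho_id_P a : a \in P -> rho a = a.
  by rewrite mem_undup => /mapP [k _ ->]; exact: rhoK.
exists (size P), (fun m => Ordinal (etrans (index_mem _ _) (rho_in_P m))).
exists (fun i => nth 0%N P i); split => [i|m] /=.
  by apply: val_inj; rewrite /= rho_id_P ?mem_nth // index_uniq ?undup_uniq.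
by rewrite nth_index // key_rho.
Qed.

Lemma truncn_eq_dist (R : realType) (a b : R) : 0 <= a -> 0 <= b ->
  Num.truncn a = Num.truncn b -> `|a - b| <= 1.
Proof.
have same_cell (t : R) : t <= a -> a < t + 1 -> t <= b -> b < t + 1 -> `|a - b| <= 1.
  by move=> *; rewrite ler_norml; apply/andP; split; lra.
move=> /truncn_itv /andP [a_lo a_hi] /truncn_itv /andP [b_lo b_hi] eq_ab.
rewrite eq_ab -natr1 in a_lo a_hi; rewrite -natr1 in b_hi.
exact: same_cell a_lo a_hi b_lo b_hi.
Qed.

(* Grid the values of the finitely many [h j] with mesh [d]: indices in one
   cell of the product grid have [d]-close values. *)
Lemma exists_quantization (R : realType) n (h : 'I_n -> nat -> R) (M d : R) :
  0 < d -> (forall j m, `|h j m| <= M) ->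
  exists r (q : nat -> 'I_r) (p : 'I_r -> nat),
    cancel p q /\ forall j m, `|h j m - h j (p (q m))| <= d.
Proof.
move=> d_gt0 h_le_M.
pose level j m := Num.truncn ((h j m + M) / d).
have h_bounds j m : - M <= h j m <= M by rewrite -ler_norml.
have shift_ge0 j m : 0 <= (h j m + M) / d.
  by apply: divr_ge0 (ltW d_gt0); case/andP: (h_bounds j m) => lo hi; lra.
have level_le j m : (level j m <= Num.truncn (2 * M / d))%N.
  by apply: le_truncn; rewrite ler_pM2r ?invr_gt0 //; case/andP: (h_bounds j m) => lo hi; lra.
pose key m : {ffun 'I_n -> 'I_(Num.truncn (2 * M / d)).+1} := [ffun j => inord (level j m)].
have [r [q [p [qpK key_pq]]]] := finite_range_section key.
exists r, q, p; split => // j m.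
have eq_level : level j (p (q m)) = level j m.
  move: (key_pq m) => /ffunP/(_ j); rewrite !ffunE => /(congr1 val).
  by rewrite /= !inordK // ltnS.
have := truncn_eq_dist (shift_ge0 j (p (q m))) (shift_ge0 j m) eq_level.
rewrite -mulrBl opprD addrACA subrr addr0 normrM normfV (gtr0_norm d_gt0).
by rewrite ler_pdivrMr // mul1r distrC.
Qed.

Lemma inf_eq_of_approx (R : realType) (E : set R) (a : R) :
  (forall eps, 0 < eps ->
     (forall e, E e -> a <= e + eps) /\ exists2 e, E e & e <= a + eps) ->
  inf E = a.
Proof.
move=> approx.
have a_lb e : E e -> a <= e.
  by move=> Ee; apply/ler_addgt0Pr => eps /approx [/(_ e Ee)].
have [_ [e0 Ee0 _]] := approx 1 ltr01.
apply/eqP; rewrite eq_le; apply/andP; split; last by apply: lb_le_inf; [exists e0|].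
apply/ler_addgt0Pr => eps /approx [_ [e Ee e_le]].
by apply: le_trans e_le; apply: ge_inf Ee; exists a.
Qed.

(* [mnorm le vee u] is, by definition, the infimum of the norms of these. *)
Definition mnorm_majorant (R : realType) (L : normedModType R)
    (le : L -> L -> Prop) (vee : L -> L -> L) (u : seq (linf R * L)) : set L :=
  [set z | le 0 z /\ forall phi, dual_ball phi ->
             le (labs vee (\sum_(p <- u) phi p.1 *: p.2)) z].

Section Corollary.
Variables (R : realType) (X : completeNormedModType R) (alpha : seq (linf R * X) -> R).
Hypothesis alpha_tens : left_tensorial (@linf_norm R) (fun x : X => `|x|) alpha.
Variables (L : completeNormedModType R) (le : L -> L -> Prop) (vee : L -> L -> L).
Hypothesis lat : is_normed_lattice le vee.
Variable J : X -> L.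
Hypothesis J_lin : forall (a : R) (x1 x2 : X), J (a *: x1 + x2) = a *: J x1 + J x2.
Hypothesis J_iso : forall x : X, `|J x| = `|x|.
Hypothesis J_bigvee : forall (k : nat) (y : 'I_k -> X),
  `| \big[vee/0]_(j < k) labs vee (J (y j)) |
    = alpha [seq (unit_vec R (nat_of_ord j), y j) | j <- enum 'I_k].
Variables (n : nat) (x : 'I_n -> X) (h : 'I_n -> linf R).

Local Notation labs := (labs vee).
Let u := [seq (h j, x j) | j <- enum 'I_n].
Let cx := \sum_(j <- enum 'I_n) `|x j|.
Let Z := mnorm_majorant le vee [seq (h j, J (x j)) | j <- enum 'I_n].

Lemma J_sum (I : Type) (s : seq I) (c : I -> R) (g : I -> X) :
  J (\sum_(i <- s) c i *: g i) = \sum_(i <- s) c i *: J (g i).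
Proof. exact: (morph_linear_combination J_lin (@scale1r R L)). Qed.

Lemma alpha_perturb d (a b : 'I_n -> linf R) :
  (forall j m, `|lval (a j) m - lval (b j) m| <= d) ->
  alpha [seq (a j, x j) | j <- enum 'I_n] <= alpha [seq (b j, x j) | j <- enum 'I_n] + d * cx.
Proof.
move=> ab_near.
rewrite (alpha_tensor_eq alpha_tens (tensor_eq_split _ a b x)).
apply: le_trans (alpha_cat alpha_tens _ _) _; rewrite lerD2l.
apply: le_trans (alpha_le_sum_norms alpha_tens _) _.
rewrite big_map /cx mulr_sumr; apply: ler_sum => j _ /=.
by apply: ler_wpM2r => //; apply: linf_norm_le => m; exact: ab_near.
Qed.

Section Quantized.
Variables (r : nat) (q : nat -> 'I_r) (p : 'I_r -> nat).
Hypothesis qpK : cancel p q.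
Variable d : R.
Hypothesis h_near : forall j m, `|lval (h j) m - lval (h j) (p (q m))| <= d.

(* [sample] reads off the values at the points [p i], one per cell of [q];
   [spread] extends a vector constantly along the cells. *)
Let spread := @linf_pullback R (fun m => Some (nat_of_ord (q m))).
Let sample := @linf_pullback R (fun m => omap p (insub m)).
Let y i := \sum_(j <- enum 'I_n) lval (h j) (p i) *: x j.
Let V := \big[vee/0]_(i < r) labs (J (y i)).

Lemma lval_spread_sample g m : lval (spread (sample g)) m = lval g (p (q m)).
Proof. by rewrite /= valK. Qed.

Lemma sample_spread_sample g : sample (spread (sample g)) = sample g.
Proof. by apply: linfP => m /=; case: (insub m) => [i|] //=; rewrite valK qpK. Qed.

Lemma alpha_sample : alpha [seq (sample (h j), x j) | j <- enum 'I_n] = `|V|.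
Proof.
rewrite /V J_bigvee (alpha_tensor_eq alpha_tens (tensor_eq_exchange (enum 'I_r) (enum 'I_n)
  (fun j i => lval (h j) (p i)) (fun i : 'I_r => unit_vec R i) x)).
by congr alpha; apply: eq_map => j; rewrite /sample pullback_insub.
Qed.

Lemma alpha_spread_sample : alpha [seq (spread (sample (h j)), x j) | j <- enum 'I_n]
  = alpha [seq (sample (h j), x j) | j <- enum 'I_n].
Proof.
apply/eqP; rewrite eq_le; apply/andP; split.
  exact: (alpha_contraction alpha_tens (linear_pullback _) (linf_norm_pullback _)
            (enum 'I_n) (fun j => sample (h j)) x).
have -> : [seq (sample (h j), x j) | j <- enum 'I_n]
    = [seq (sample (spread (sample (h j))), x j) | j <- enum 'I_n].
  by apply: eq_map => j; rewrite sample_spread_sample.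
exact: (alpha_contraction alpha_tens (linear_pullback _) (linf_norm_pullback _)
          (enum 'I_n) (fun j => spread (sample (h j))) x).
Qed.

Lemma h_near_spread_sample j m : `|lval (h j) m - lval (spread (sample (h j))) m| <= d.
Proof. by rewrite lval_spread_sample. Qed.

Lemma V_ge0 : le 0 V.
Proof. by apply: (lat_bigvee_ge0 lat) => i; exact: (lat_abs_ge0 lat). Qed.

Lemma alpha_le_majorant z : Z z -> alpha u <= `|z| + d * cx.
Proof.
case=> z_ge0 z_maj.
have V_le_z : le V z.
  apply: (lat_bigvee_lub lat) z_ge0 _ => i.
  by have := z_maj _ (dual_ball_eval _ (p i)); rewrite big_map /y J_sum.
apply: le_trans (alpha_perturb h_near_spread_sample) _.
by rewrite alpha_spread_sample alpha_sample lerD2r; exact: (lat_norm_le lat V_ge0 V_le_z).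
Qed.

Lemma majorant_decomposition phi : dual_ball phi ->
  \sum_(j <- enum 'I_n) phi (h j) *: J (x j)
    = \sum_(i <- enum 'I_r) phi (spread (unit_vec R i)) *: J (y i)
      + \sum_(j <- enum 'I_n) phi (h j - spread (sample (h j))) *: J (x j).
Proof.
move=> phi_ball.
have psi_ball : dual_ball (phi \o spread)
  := dual_ball_comp phi_ball (linear_pullback _) (linf_norm_pullback _).
have split_phi j :
    phi (h j) = (phi \o spread) (sample (h j)) + phi (h j - spread (sample (h j))).
  by rewrite (dual_ballB phi_ball) addrC subrK.
under eq_bigr => j _ do rewrite split_phi scalerDl.
rewrite big_split; congr (_ + _).
under eq_bigr => j _ do rewrite /sample pullback_insub (dual_ball_sum psi_ball) scaler_suml.
rewrite exchange_big; apply: eq_bigr => i _.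
by rewrite /y J_sum scaler_sumr; apply: eq_bigr => j _; rewrite scalerA mulrC.
Qed.

Hypothesis d_ge0 : 0 <= d.

Lemma majorant_near : exists2 z, Z z & `|z| <= alpha u + d * cx + d * cx.
Proof.
pose W := d *: \sum_(j <- enum 'I_n) labs (J (x j)).
have W_ge0 : le 0 W.
  rewrite /W -[X in le X _](scaler0 L d); apply: (Defs.le_scale lat d_ge0).
  exact: (lat_sumr_ge0 lat _ (fun j => lat_abs_ge0 lat (J (x j)))).
exists (V + W).
  split; first by have := lat_lerD lat V_ge0 W_ge0; rewrite addr0.
  move=> phi phi_ball; rewrite big_map (majorant_decomposition phi_ball).
  apply: (lat_le_trans lat (lat_absD lat _ _)); apply: (lat_lerD lat).
    apply: (lat_abs_combination_le_bigvee lat) => [i _|]; first exact: mem_index_enum.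
    exact: (dual_ball_sum_unit_vec
              (dual_ball_comp phi_ball (linear_pullback _) (linf_norm_pullback _))).
  apply: (lat_abs_combination_le_sum lat) => j.
  by apply: le_trans (phi_ball.2 _) _; apply: linf_norm_le; exact: h_near_spread_sample.
apply: le_trans (ler_normD _ _) (lerD _ _).
  rewrite -alpha_sample -alpha_spread_sample; apply: alpha_perturb => j m.
  by rewrite distrC; exact: h_near_spread_sample.
rewrite normrZ ger0_norm // ler_wpM2l //; apply: le_trans (ler_norm_sum _ _ _) _.
by apply: ler_sum => j _; rewrite (lat_norm_abs lat) J_iso.
Qed.

End Quantized.

Lemma approx_bounds eps : 0 < eps ->
  (forall z, Z z -> alpha u <= `|z| + eps) /\ exists2 z, Z z & `|z| <= alpha u + eps.
Proof.
move=> eps_gt0.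
have cx_ge0 : 0 <= cx by apply: sumr_ge0.
pose d := eps / (2 * cx + 1).
have d_gt0 : 0 < d by apply: divr_gt0 => //; lra.
have two_dcx_le : d * cx + d * cx <= eps.
  have -> : d * cx + d * cx = d * (2 * cx) by ring.
  rewrite -[X in _ <= X](divfK (_ : 2 * cx + 1 != 0)); last by rewrite gt_eqF //; lra.
  by rewrite -/d ler_pM2l // lerDl.
have dcx_ge0 : 0 <= d * cx := mulr_ge0 (ltW d_gt0) cx_ge0.
have [M h_le_M] : exists M, forall j m, `|lval (h j) m| <= M.
  exists (\sum_(j <- enum 'I_n) linf_norm (h j)) => j m.
  apply: le_trans (lval_le_linf_norm _ m) _.
  rewrite (bigD1_seq j) ?mem_enum ?enum_uniq //= lerDl.
  by apply: sumr_ge0 => k _; exact: linf_norm_ge0.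
have [r [q [p [qpK h_near]]]] := exists_quantization d_gt0 h_le_M.
split=> [z Zz|].
  apply: le_trans (alpha_le_majorant qpK h_near Zz) _.
  by rewrite lerD2l; lra.
have [z Zz z_le] := majorant_near qpK h_near (ltW d_gt0).
by exists z => //; apply: le_trans z_le _; rewrite -addrA lerD2l.
Qed.

End Corollary.

Theorem corollary1p8 (R : realType) (X : completeNormedModType R)
  (alpha : seq (linf R * X) -> R)
  (Halpha : left_tensorial (@linf_norm R) (fun x : X => `|x|) alpha)
  (L : completeNormedModType R) (le : L -> L -> Prop) (vee : L -> L -> L)
  (HL : is_normed_lattice le vee)
  (J : X -> L)
  (HJlin : forall (a : R) (x1 x2 : X), J (a *: x1 + x2) = a *: J x1 + J x2)
  (HJiso : forall x : X, `|J x| = `|x|)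
  (HJ : forall (k : nat) (y : 'I_k -> X),
     `| \big[vee/0]_(j < k) labs vee (J (y j)) |
       = alpha [seq (unit_vec R (nat_of_ord j), y j) | j <- enum 'I_k]) :
  forall (n : nat) (x : 'I_n -> X) (h : 'I_n -> linf R),
    mnorm le vee [seq (h j, J (x j)) | j <- enum 'I_n]
      = alpha [seq (h j, x j) | j <- enum 'I_n].
Proof.
move=> n x h; apply: inf_eq_of_approx => eps eps_gt0.
have [lower [z Zz z_le]] := approx_bounds Halpha HL HJlin HJiso HJ x h eps_gt0.
split=> [_ [z' Zz' <-]|]; first exact: lower.
by exists `|z|; first exists z.
Qed.
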